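(* Let $f\in\mathbb{Z}_2[z]$ with $f(0)=1$ and $\deg f=n$. Then $P_f\le 4^n$.
   Context: $\mathbb{Z}_2$ is the two-element field. For $f\in\mathbb{Z}_2[z]$ with $f(0)=1$ and $\deg f=n$, let $V_f$ be the set of polynomials in $\mathbb{Z}_2[z]$ of degree less than $n$ (including $0$), and let $\sigma_0,\sigma_1:V_f\to V_f$ be the maps $\sigma_0(g)=(gz)\bmod f$ and $\sigma_1(g)=(gz+1)\bmod f$, where $h\bmod f$ is the remainder of $h$ upon division by $f$; these are bijections since $f(0)=1$. Let $G_f$ be the permutation group on $V_f$ generated by $\sigma_0,\sigma_1$, and $P_f=|G_f|$. (Equivalently, $\sigma_0,\sigma_1$ are the transition maps of the division-by-$f$ automaton on states $V_f$ with transitions $g\xrightarrow{b}(gz+b)\bmod f$; every word $u\in\{0,1\}^*$ labels, from any state, a path returning to it after reading $u^{P_f}$.) *)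

From HB Require Import structures.
From mathcomp Require Import all_boot all_order all_fingroup all_algebra.
Set Implicit Arguments. Unset Strict Implicit. Unset Printing Implicit Defensive.
Import GRing.Theory.
Local Open Scope ring_scope.

Notation F2 := 'F_2.

(* V_f : polynomials of degree < n = deg f, i.e. of size <= (size f).-1. *)
Notation Vf f := {poly_((size f).-1) F2}.

Definition sigma_fun (f : {poly F2}) (b : F2) (g : Vf f) : Vf f :=
  insubd (0 : Vf f) (((val g) * 'X + b%:P) %% f).
Arguments sigma_fun : clear implicits.

Lemma sigma_fun_val (f : {poly F2}) (b : F2) (g : Vf f) :
  f != 0 -> val (sigma_fun f b g) = ((val g) * 'X + b%:P) %% f.
Proof.
move=> f0; rewrite /sigma_fun val_insubd.
have -> : ((val g * 'X + b%:P) %% f) \is a poly_of_size (size f).-1 => //.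
rewrite qualifE /= -ltnS prednK ?ltn_modpN0 //.
by rewrite size_poly_gt0.
Qed.

Lemma sigma_fun_inj (f : {poly F2}) (b : F2) :
  f`_0 = 1 -> injective (sigma_fun f b).
Proof.
move=> f01.
have f0 : f != 0.
  by apply/eqP => E0; move: f01; rewrite E0 coef0 => /eqP; rewrite eq_sym oner_eq0.
move=> g h /(congr1 val); rewrite !sigma_fun_val // => E.
apply/val_inj/eqP; rewrite -subr_eq0; apply/eqP.
have Hd : f %| (val g - val h) * 'X.
  apply/modp_eq0P.
  rewrite (_ : (val g - val h) * 'X = (val g * 'X + b%:P) - (val h * 'X + b%:P));
    last by rewrite mulrBl opprD addrACA subrr addr0.
  by rewrite modpD modNp E subrr.
have cop : coprimep f 'X.
  rewrite -[X in coprimep _ X]subr0 -polyC0 coprimep_XsubC /root horner_coef0 f01.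
  by rewrite oner_eq0.
rewrite (Gauss_dvdpl _ cop) in Hd.
apply/eqP; apply: contraTT Hd => nz; apply/negP => /(dvdp_leq nz).
have lt : forall p : {poly F2}, (size p <= (size f).-1 -> size p < size f)%N.
  by move=> p; rewrite -ltnS prednK // size_poly_gt0.
apply/negP; rewrite -ltnNge.
apply: leq_ltn_trans (size_polyD _ _) _; rewrite size_polyN gtn_max.
by rewrite !lt ?size_npoly.
Qed.

Definition sigma (f : {poly F2}) (hf : f`_0 = 1) (b : F2) : {perm Vf f} :=
  perm (@sigma_fun_inj f b hf).

Definition Gf (f : {poly F2}) (hf : f`_0 = 1) : {set {perm Vf f}} :=
  <<[set sigma hf 0; sigma hf 1]>>%g.

Definition Pf (f : {poly F2}) (hf : f`_0 = 1) : nat := #|Gf hf|.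

From mathcomp Require Import all_boot all_order all_fingroup all_algebra.
Set Implicit Arguments.
Unset Strict Implicit.
Unset Printing Implicit Defensive.
Local Open Scope ring_scope.
Import GRing.Theory.

(* Both generators are affine maps g |-> (h g + c) mod f of V_f, and affine
   maps compose to affine maps, so every element of G_f is affine.  An affine
   map is determined by the pair (h mod f, c mod f) of elements of V_f, hence
   P_f <= |V_f|^2 = (2^n)^2 = 4^n. *)

Section AffineMaps.
Variables (K : finFieldType) (f : {poly K}).
Hypothesis f_neq0 : f != 0.
Local Notation V := {poly_((size f).-1) K}.

Definition npoly_modp (p : {poly K}) : V := insubd (0 : V) (p %% f).

Lemma npoly_modpE p : val (npoly_modp p) = p %% f.
Proof.
rewrite /npoly_modp val_insubd qualifE /= -ltnS prednK ?ltn_modpN0 //.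
by rewrite size_poly_gt0.
Qed.

Lemma modp_npoly (g : V) : val g %% f = val g.
Proof.
apply: modp_small; apply: leq_ltn_trans (size_npoly g) _.
by rewrite ltn_predL size_poly_gt0.
Qed.

Definition is_affine (h c : V) (p : {perm V}) :=
  [forall g, val (p g) == (val h * val g + val c) %% f].

Definition affine_perms : {set {perm V}} :=
  [set p | [exists hc : V * V, is_affine hc.1 hc.2 p]].

Lemma affine_permsP (h c : {poly K}) (p : {perm V}) :
  (forall g, val (p g) = (h * val g + c) %% f) -> p \in affine_perms.
Proof.
move=> pE; rewrite inE; apply/existsP; exists (npoly_modp h, npoly_modp c).
apply/forallP => g /=; rewrite pE !npoly_modpE; apply/eqP.
by rewrite modpD [in RHS]modpD modp_id [h %% f * _]mulrC modp_mul mulrC.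
Qed.

Lemma affine_perms_group_set : group_set affine_perms.
Proof.
apply/group_setP; split.
  by apply: (@affine_permsP 1 0) => g; rewrite perm1 mul1r addr0 modp_npoly.
move=> p q; rewrite [p \in _]inE [q \in _]inE => /existsP[[h c] /forallP /= pE].
move=> /existsP[[h' c'] /forallP /= qE].
apply: (@affine_permsP (val h' * val h) (val h' * val c + val c')) => g.
rewrite permM; apply: etrans (eqP (qE (p g))) _; rewrite (eqP (pE g)).
by rewrite addrA modpD [in RHS]modpD modp_mul mulrDr mulrA.
Qed.

Lemma is_affine_uniq h c p q : is_affine h c p -> is_affine h c q -> p = q.
Proof.
move=> /forallP pE /forallP qE; apply/permP => g; apply: val_inj.
by rewrite (eqP (pE g)) (eqP (qE g)).
Qed.

Definition affine_of (hc : V * V) : {perm V} :=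
  odflt 1%g [pick p | is_affine hc.1 hc.2 p].

Lemma card_affine_perms : (#|affine_perms| <= #|V| ^ 2)%N.
Proof.
have sub_im : affine_perms \subset affine_of @: setT.
  apply/subsetP => p; rewrite inE => /existsP[hc p_aff].
  apply/imsetP; exists hc; rewrite ?inE // /affine_of.
  by case: pickP => [q /(is_affine_uniq p_aff) | /(_ p)]; rewrite ?p_aff.
apply: leq_trans (subset_leq_card sub_im) _.
by apply: leq_trans (leq_imset_card _ _) _; rewrite cardsT card_prod.
Qed.

End AffineMaps.

Lemma coef0_eq1_neq0 (R : nzRingType) (p : {poly R}) : p`_0 = 1 -> p != 0.
Proof. by apply: contraPneq => ->; rewrite coef0 => /esym/eqP; rewrite oner_eq0. Qed.

Section Generators.
Variables (f : {poly 'F_2}) (hf : f`_0 = 1).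

Let f_neq0 : f != 0 := coef0_eq1_neq0 hf.

Lemma sigma_affine (b : 'F_2) : sigma hf b \in affine_perms f.
Proof.
apply: (@affine_permsP _ _ f_neq0 'X b%:P) => g.
by rewrite permE sigma_fun_val // mulrC.
Qed.

Lemma Gf_affine : Gf hf \subset affine_perms f.
Proof.
rewrite /Gf (gen_subG _ (Group (affine_perms_group_set f_neq0))).
by apply/subsetP => p /set2P[] ->; apply: sigma_affine.
Qed.

End Generators.

Theorem mainTheorem15 (n : nat) (f : {poly 'F_2}) (hf : f`_0 = 1)
  (hdeg : (size f).-1 = n) :
  (Pf hf <= 4 ^ n)%N.
Proof.
apply: leq_trans (subset_leq_card (Gf_affine hf)) _.
apply: leq_trans (card_affine_perms f) _.
by rewrite card_npoly card_Fp // hdeg -expnM mulnC expnM.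
Qed.
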